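(* Let $\phi,\alpha\in[0,\pi/2]$, $\beta\in[0,2\pi]$, and let $|\psi_1\rangle=\frac{1}{\sqrt2}(|00\rangle+|11\rangle)$ and $|\psi_2\rangle=\cos\phi(\cos\alpha|01\rangle+\sin\alpha|10\rangle)+e^{i\beta}\frac{\sin\phi}{\sqrt2}(|00\rangle-|11\rangle)$. Then there exist single-qubit unitaries $\mathcal V_a,\mathcal V_b$, a real phase $\zeta$ and an angle $\theta'\in[0,\pi/2]$ such that $(\mathcal V_a\otimes\mathcal V_b)|\psi_1\rangle=\frac{1}{\sqrt2}(|01\rangle+|10\rangle)$ and $(\mathcal V_a\otimes\mathcal V_b)|\psi_2\rangle=e^{i\zeta}(\cos\theta'|00\rangle+\sin\theta'|11\rangle)$, where $\sin2\theta'=\left|e^{2i\beta}\sin^2\phi+\cos^2\phi\sin2\alpha\right|$. Consequently, for any $\nu_1,\nu_2\in[0,1]$ with $\nu_1+\nu_2=1$, the state $\nu_1|\psi_1\rangle\langle\psi_1|+\nu_2|\psi_2\rangle\langle\psi_2|$ is locally unitarily equivalent to $\nu_2|\psi_1'\rangle\langle\psi_1'|+\nu_1|\psi_2'\rangle\langle\psi_2'|$ with $|\psi_1'\rangle=\cos\theta'|00\rangle+\sin\theta'|11\rangle$ and $|\psi_2'\rangle=\frac1{\sqrt2}(|01\rangle+|10\rangle)$.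
   Context: Qubits are labelled so that the first tensor factor belongs to Alice and the second to Bob; $\{|0\rangle,|1\rangle\}$ is the computational basis and $|ij\rangle=|i\rangle\otimes|j\rangle$. *)

(* R : realType (MathComp-Analysis trigo for sin/cos/pi),
   complex numbers C = R[i] (mathcomp-real-closed), Kronecker product of
   matrices *t (mathcomp-real-closed mxtens, index (i,j) |-> i*n + j, so the
   first tensor factor (Alice) is the most significant one). *)
From HB Require Import structures.
From mathcomp Require Import all_boot all_order all_algebra.
From mathcomp Require Import reals trigo.
From mathcomp Require Import complex mxtens.
Set Implicit Arguments. Unset Strict Implicit. Unset Printing Implicit Defensive.
Import Order.TTheory GRing.Theory Num.Theory.
Local Open Scope ring_scope.
Local Open Scope complex_scope.

Section Qubits.
Variable R : realType.
Local Notation C := (R[i]).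

Definition rc (x : R) : C := x%:C.

Definition expi (x : R) : C := (cos x) +i* (sin x).

Definition adj {m n} (A : 'M[C]_(m, n)) : 'M[C]_(n, m) := map_mx Num.conj (A^T).

Definition unitary {n} (U : 'M[C]_n) : Prop := U *m adj U = 1%:M.

Definition ket (b : 'I_2) : 'cV[C]_2 := delta_mx b 0.

Definition ket2 (i j : 'I_2) : 'M[C]_(2 * 2, 1 * 1) := ket i *t ket j.

Definition proj {n m} (v : 'M[C]_(n, m)) : 'M[C]_n := v *m adj v.

Definition LU_equiv (rho sigma : 'M[C]_(2 * 2)) : Prop :=
  exists Ua Ub : 'M[C]_2, unitary Ua /\ unitary Ub /\
    (Ua *t Ub) *m rho *m adj (Ua *t Ub) = sigma.
End Qubits.

From HB Require Import structures.
From mathcomp Require Import all_boot all_order all_algebra.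
From mathcomp Require Import reals trigo.
From mathcomp Require Import complex mxtens.
From mathcomp Require Import ring lra zify.
Set Implicit Arguments. Unset Strict Implicit. Unset Printing Implicit Defensive.
Import Order.TTheory GRing.Theory Num.Theory.
Local Open Scope complex_scope.
(* Reopened so that [x^*] is [Num.conj], the conjugation used by [adj]. *)
Local Open Scope ring_scope.

(* A two-qubit vector sum_ij M_ij |ij> is the vectorisation [vec M] of the 2 x 2
   matrix M, and (A (x) B) vec M = vec (A M B^T).  Thus psi1 = vec (1 / sqrt 2) and
   psi2 = vec M with M traceless of Frobenius norm 1.  Such an M is unitarily similar
   to e^{i zeta} [[0, cos theta'], [sin theta', 0]]: the numerical range of a traceless
   2 x 2 matrix contains 0 (on the Bloch sphere <v|M|v> is a linear form in a unit
   vector of R^3, and two real linear conditions have a common unit solution), which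
   gives a unitary killing the diagonal, and a diagonal phase then aligns the phases
   of the two off-diagonal entries.  With Va = U and Vb = X conj(U), X the bit flip,
   psi1 goes to vec (X / sqrt 2) and psi2 to vec (U M U^* X).  Finally det is invariant
   under unitary conjugation, and -2 det M = e^{2 i beta} sin^2 phi + cos^2 phi sin 2alpha
   while |-2 det (e^{i zeta} [[0, c], [s, 0]])| = 2 c s = sin 2theta'. *)

Section Vectorization.
Variable R : comPzRingType.

Definition vec m n (M : 'M[R]_(m, n)) : 'M[R]_(m * n, 1 * 1) :=
  \matrix_(k, l) M (mxtens_unindex k).1 (mxtens_unindex k).2.

Lemma vecE m n (M : 'M[R]_(m, n)) i j l : vec M (mxtens_index (i, j)) l = M i j.
Proof. by rewrite mxE mxtens_indexK. Qed.

Lemma tensmx_mul_vec m n (A : 'M[R]_m) (B : 'M[R]_n) (M : 'M[R]_(m, n)) :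
  (A *t B) *m vec M = vec (A *m M *m B^T).
Proof.
apply/matrixP => k l; case: (mxtens_indexP k) => i j.
rewrite vecE !mxE (reindex (@mxtens_index m n)) /=; last first.
  by exists (@mxtens_unindex m n) => x _; rewrite (mxtens_indexK, mxtens_unindexK).
transitivity (\sum_a \sum_b (A *t B) (mxtens_index (i, j)) (mxtens_index (a, b))
                            * vec M (mxtens_index (a, b)) l).
  by rewrite pair_bigA; apply: eq_bigr => -[a b].
rewrite exchange_big; apply: eq_bigr => b _; rewrite mxE mulr_suml.
by apply: eq_bigr => a _; rewrite tensmxE vecE mxE mulrAC.
Qed.

End Vectorization.

Lemma sum_ord2 (V : nmodType) (F : 'I_2 -> V) : \sum_(i < 2) F i = F 0 + F 1.
Proof. by rewrite big_ord_recl big_ord1; congr (_ + F _); apply: val_inj. Qed.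

Lemma sum_ord3 (V : nmodType) (F : 'I_3 -> V) : \sum_(i < 3) F i = F 0 + F 1 + F 2.
Proof.
by rewrite !big_ord_recr big_ord0 /= add0r; congr (F _ + F _ + F _); apply: val_inj.
Qed.

Lemma ord2P (k : 'I_2) : k = 0 \/ k = 1.
Proof. by case: k => -[|[|//]] ?; [left|right]; apply: val_inj. Qed.

Lemma exists_nonzero_ker (F : fieldType) m n (A : 'M[F]_(m, n)) : (n < m)%N ->
  exists2 u : 'rV[F]_m, u != 0 & u *m A = 0.
Proof.
move=> lt_nm; have /rowV0Pn [u /sub_kermxP uA0 u_neq0] : kermx A != 0.
  by rewrite -mxrank_eq0 mxrank_ker; have := rank_leq_col A; lia.
by exists u.
Qed.

Ltac mx2_simpl :=
  rewrite !(mxE, sum_ord2) /= ?(rmorphD, rmorphB, rmorphN, rmorphM, rmorph0, rmorph1) /=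
          ?(conjCK, mulr1n, mulr0n).

Ltac mx2_entries := let i := fresh "i" in let j := fresh "j" in
  apply/matrixP => i j; case: (ord2P i) => ->; case: (ord2P j) => ->; mx2_simpl.

Ltac vec2_entries := let k := fresh "k" in let l := fresh "l" in
  let i := fresh "i" in let j := fresh "j" in
  apply/matrixP => k l; case: (mxtens_indexP k) => i j; rewrite !mxE !mxtens_indexK /=;
  case: (ord2P i) => ->; case: (ord2P j) => ->; rewrite ?(mxE, sum_ord2) /= ?(mulr1n, mulr0n).

Section TwoQubits.
Variable R : realType.
Local Notation C := R[i].

Lemma ket2E (i j : 'I_2) : ket2 R i j = vec (delta_mx i j).
Proof.
apply/matrixP => k l; case: (mxtens_indexP k) => a b.
rewrite vecE !mxE mxtens_indexK !(ord1 (mxtens_unindex l).1, ord1 (mxtens_unindex l).2).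
by rewrite !eqxx !andbT; case: (a == i); case: (b == j); rewrite ?(mul1r, mul0r).
Qed.

Lemma adjM m n p (A : 'M[C]_(m, n)) (B : 'M[C]_(n, p)) : adj (A *m B) = adj B *m adj A.
Proof. by rewrite /adj trmx_mul map_mxM. Qed.

Lemma adjK m n (A : 'M[C]_(m, n)) : adj (adj A) = A.
Proof. by apply/matrixP => i j; rewrite !mxE conjCK. Qed.

Lemma adjZ m n (c : C) (A : 'M[C]_(m, n)) : adj (c *: A) = c^* *: adj A.
Proof. by apply/matrixP => i j; rewrite !mxE rmorphM. Qed.

Lemma adj_trmx m n (A : 'M[C]_(m, n)) : adj A^T = (adj A)^T.
Proof. by apply/matrixP => i j; rewrite !mxE. Qed.

Lemma unitaryC n (U : 'M[C]_n) : unitary U -> adj U *m U = 1%:M.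
Proof. exact: mulmx1C. Qed.

Lemma unitaryM n (U V : 'M[C]_n) : unitary U -> unitary V -> unitary (U *m V).
Proof. by move=> hU hV; rewrite /unitary adjM mulmxA -(mulmxA U) hV mulmx1. Qed.

Lemma unitary_trmx_adj n (U : 'M[C]_n) : unitary U -> unitary (adj U)^T.
Proof. by move=> hU; rewrite /unitary adj_trmx adjK -trmx_mul hU trmx1. Qed.

Lemma adj_mul_adj n (U N : 'M[C]_n) : adj (U *m N *m adj U) = U *m adj N *m adj U.
Proof. by rewrite !adjM adjK mulmxA. Qed.

Lemma mxtrace_unitary_conj n (U N : 'M[C]_n) :
  unitary U -> \tr (U *m N *m adj U) = \tr N.
Proof. by move=> hU; rewrite mxtrace_mulC mulmxA unitaryC // mul1mx. Qed.

Lemma det_unitary_conj n (U N : 'M[C]_n) :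
  unitary U -> \det (U *m N *m adj U) = \det N.
Proof.
by move=> hU; rewrite !det_mulmx mulrAC -det_mulmx hU det1 mul1r.
Qed.

Lemma frobenius_unitary_conj n (U N : 'M[C]_n) : unitary U ->
  \tr ((U *m N *m adj U) *m adj (U *m N *m adj U)) = \tr (N *m adj N).
Proof.
move=> hU; rewrite adj_mul_adj -[RHS](mxtrace_unitary_conj _ hU).
by rewrite !mulmxA -(mulmxA _ (adj U) U) unitaryC // mulmx1.
Qed.

Lemma tensmx_adjT_mul_vec n (U V M : 'M[C]_n) :
  (U *t (V *m (adj U)^T)) *m vec M = vec (U *m M *m adj U *m V^T).
Proof. by rewrite tensmx_mul_vec trmx_mul trmxK !mulmxA. Qed.

Lemma proj_mul m n (W : 'M[C]_m) (v : 'M[C]_(m, n)) : proj (W *m v) = W *m proj v *m adj W.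
Proof. by rewrite /proj adjM !mulmxA. Qed.

Lemma projZ m n (c : C) (v : 'M[C]_(m, n)) : c * c^* = 1 -> proj (c *: v) = proj v.
Proof. by move=> c_unit; rewrite /proj adjZ -scalemxAl -scalemxAr scalerA c_unit scale1r. Qed.

Lemma mulmx_mix_proj_adj m n (W : 'M[C]_m) (a b : C) (v w : 'M[C]_(m, n)) :
  W *m (a *: proj v + b *: proj w) *m adj W = a *: proj (W *m v) + b *: proj (W *m w).
Proof. by rewrite mulmxDr mulmxDl -!scalemxAr -!scalemxAl !proj_mul. Qed.

Lemma mxtrace2 (N : 'M[C]_2) : \tr N = N 0 0 + N 1 1.
Proof. by rewrite /mxtrace sum_ord2. Qed.

Lemma det2 (N : 'M[C]_2) : \det N = N 0 0 * N 1 1 - N 0 1 * N 1 0.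
Proof.
rewrite (expand_det_row _ 0) sum_ord2 /cofactor !det_mx11 !mxE /=.
have -> : lift 0 (0 : 'I_1) = 1 :> 'I_2 by apply: val_inj.
have -> : lift 1 (0 : 'I_1) = 0 :> 'I_2 by apply: val_inj.
by rewrite addn0 add0n modn_small // expr0 expr1 mul1r mulN1r mulrN.
Qed.

Lemma expi_mulJ (x : R) : expi x * (expi x)^* = 1.
Proof. by rewrite /expi /=; simpc; rewrite -!expr2 cos2Dsin2 mulrC addNr. Qed.

Lemma normr_expi (x : R) : `|expi x| = 1.
Proof. by apply/eqP; rewrite -sqrp_eq1 // sqr_normc expi_mulJ. Qed.

Lemma expiD (x y : R) : expi (x + y) = expi x * expi y.
Proof. by rewrite /expi sinD cosD; simpc; congr (_ +i* _); rewrite addrC. Qed.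

Lemma expi_mul2 (x : R) : expi (2 * x) = expi x ^+ 2.
Proof. by rewrite mulr_natl mulr2n expiD expr2. Qed.

Lemma sin_mul2 (x : R) : sin (2 * x) = 2 * sin x * cos x.
Proof. by rewrite mulr_natl mulr2n sinD; ring. Qed.

Lemma conj_rc (x : R) : (rc x)^* = rc x.
Proof. exact: conjc_real. Qed.

Lemma expi_surj (e : C) : e * e^* = 1 -> exists z : R, expi z = e.
Proof.
case: e => a b /= h.
have h2 : a ^+ 2 + b ^+ 2 = 1.
  by move: h; simpc => /eqP; rewrite eq_complex /= => /andP [/eqP <- _]; ring.
have ha : -1 <= a <= 1 by apply/andP; split; nra.
have sqrt_b : Num.sqrt (1 - a ^+ 2) = `|b|.
  by rewrite (_ : 1 - a ^+ 2 = b ^+ 2) ?sqrtr_sqr //; lra.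
have [hb|hb] := leP 0 b.
  by exists (acos a); rewrite /expi acosK ?in_itv //= sin_acos // sqrt_b ger0_norm.
exists (- acos a); rewrite /expi cosN sinN acosK ?in_itv //= sin_acos //.
by rewrite sqrt_b ltr0_norm // opprK.
Qed.

Lemma cos_sin_pihalf (c s : R) : 0 <= c -> 0 <= s -> c ^+ 2 + s ^+ 2 = 1 ->
  exists th : R, [/\ 0 <= th <= pi / 2, cos th = c & sin th = s].
Proof.
move=> hc hs h.
have hc1 : -1 <= c <= 1 by apply/andP; split; nra.
exists (acos c); split.
- rewrite acos_ge0 //= leNgt; apply/negP => hlt.
  have := hlt; rewrite -ltr_cos ?acosK ?cos_pihalf ?in_itv /= ?acos_ge0 ?acos_lepi //.
  + lra.
  + by rewrite divr_ge0 ?pi_ge0 // ler_pdivrMr // ler_peMr ?pi_ge0 // ler1n.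
- by rewrite acosK // in_itv /=.
- by rewrite sin_acos // (_ : 1 - c ^+ 2 = s ^+ 2) ?sqrtr_sqr ?ger0_norm //; lra.
Qed.

Lemma polar_unit (z : C) : exists u : C, u * u^* = 1 /\ z = u * `|z|.
Proof.
have [->|hz] := eqVneq z 0; first by exists 1; rewrite rmorph1 mulr1 normr0 mulr0.
have hn : `|z| != 0 by rewrite normr_eq0.
exists (z / `|z|); split; last by rewrite divfK.
by rewrite -normCK normf_div normr_id divff // expr1n.
Qed.

Lemma normr_complex_real (z : C) : exists2 r : R, 0 <= r & `|z| = r%:C.
Proof. by have /complex_realP [r er] := normr_real z; exists r; rewrite // -ler0c -er. Qed.

Lemma phase_align (p q : C) : p * p^* + q * q^* = 1 ->
  exists (w e : C) (th : R), [/\ w * w^* = 1, e * e^* = 1, 0 <= th <= pi / 2,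
    w * p = e * (cos th)%:C & w^* * q = e * (sin th)%:C].
Proof.
move=> hpq.
have [up [hup ep]] := polar_unit p; have [uq [huq eq]] := polar_unit q.
have [c hc ec] := normr_complex_real p; have [s hs es] := normr_complex_real q.
have [th [hth hcos hsin]] : exists th : R, [/\ 0 <= th <= pi / 2, cos th = c & sin th = s].
  apply: cos_sin_pihalf => //; apply: complexI.
  by rewrite rmorphD !rmorphXn /= -ec -es !normCK hpq.
subst c s.
(* The phase of [w] is the half-difference of the phases of [q] and [p]. *)
set w := sqrtC (uq * up^*).
have hw2 : w ^+ 2 = uq * up^* by rewrite sqrtCK.
have huq_w : uq = w ^+ 2 * up by rewrite hw2 -mulrA [_^* * _]mulrC hup mulr1.
have hw : w * w^* = 1.
  apply/eqP; rewrite -sqrp_eq1 ?mul_conjC_ge0 // exprMn -rmorphXn hw2 rmorphM /= conjCK.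
  by rewrite mulrACA huq mul1r mulrC hup.
exists w, (w * up), th; split => //.
- by rewrite rmorphM /= mulrACA hw hup mulr1.
- by rewrite {1}ep ec mulrA.
- rewrite {1}eq es huq_w mulrA; congr (_ * _).
  by rewrite expr2 -!mulrA mulrA [_^* * _]mulrC hw mul1r.
Qed.

Lemma exists_unit_common_zero3 (c1 c2 c3 d1 d2 d3 : R) : exists t1 t2 t3 : R,
  [/\ 0 <= t3, t1 ^+ 2 + t2 ^+ 2 + t3 ^+ 2 = 1,
      c1 * t1 + c2 * t2 + c3 * t3 = 0 & d1 * t1 + d2 * t2 + d3 * t3 = 0].
Proof.
pose A : 'M[R]_(3, 2) :=
  \matrix_(i, j) (if j == 0 then [:: c1; c2; c3]`_i else [:: d1; d2; d3]`_i).
have [u u_neq0 uA0] := exists_nonzero_ker A isT.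
move/matrixP: uA0 => uA0.
have ec : u 0 0 * c1 + u 0 1 * c2 + u 0 2 * c3 = 0.
  by move: (uA0 0 0); rewrite !mxE sum_ord3 !mxE.
have ed : u 0 0 * d1 + u 0 1 * d2 + u 0 2 * d3 = 0.
  by move: (uA0 0 1); rewrite !mxE sum_ord3 !mxE.
set S := u 0 0 ^+ 2 + u 0 1 ^+ 2 + u 0 2 ^+ 2.
have S_gt0 : 0 < S.
  have S_sum : S = \sum_(i < 3) u 0 i ^+ 2 by rewrite sum_ord3.
  rewrite lt0r S_sum sumr_ge0 ?andbT => [|i _]; last exact: sqr_ge0.
  apply: contraNneq u_neq0 => /psumr_eq0P u2_eq0; apply/eqP/rowP => i.
  by rewrite mxE; apply/eqP; rewrite -sqrf_eq0 u2_eq0 // => j _; apply: sqr_ge0.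
have [sg [sg2 sg_u2]] : exists sg : R, sg ^+ 2 = 1 /\ 0 <= sg * u 0 2.
  have [?|?] := leP 0 (u 0 2); [exists 1 | exists (-1)];
    by split; rewrite ?sqrrN ?expr1n //; nra.
pose k := sg / Num.sqrt S.
have k2S : k ^+ 2 * S = 1.
  by rewrite /k expr_div_n sqr_sqrtr ?ltW // sg2 mul1r mulVf ?gt_eqF.
exists (k * u 0 0), (k * u 0 1), (k * u 0 2); split.
- by rewrite /k mulrAC divr_ge0 ?sqrtr_ge0.
- by rewrite -k2S /S; ring.
- by rewrite -[RHS](mulr0 k) -ec; ring.
- by rewrite -[RHS](mulr0 k) -ed; ring.
Qed.

Lemma qubit_of_bloch (t1 t2 t3 : R) : -1 < t3 -> t1 ^+ 2 + t2 ^+ 2 + t3 ^+ 2 = 1 ->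
  exists x y : C, [/\ x * x^* + y * y^* = 1, x * x^* - y * y^* = t3%:C
                    & 2%:R * (x^* * y) = t1 +i* t2].
Proof.
move=> t3_gtN1 t_unit.
set r := Num.sqrt ((1 + t3) / 2).
have r_gt0 : 0 < r by rewrite sqrtr_gt0 divr_gt0 //; lra.
have r2 : r ^+ 2 = (1 + t3) / 2 by rewrite sqr_sqrtr // divr_ge0 //; lra.
have r_neq0 : r != 0 by rewrite gt_eqF.
have y2 : t1 / (2 * r) * (t1 / (2 * r)) + t2 / (2 * r) * (t2 / (2 * r)) = (1 - t3) / 2.
  transitivity ((t1 ^+ 2 + t2 ^+ 2) / (4 * r ^+ 2)); first by field.
  rewrite r2 (_ : t1 ^+ 2 + t2 ^+ 2 = (1 - t3) * (1 + t3)); last by lra.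
  by field; apply/eqP; lra.
exists r%:C, ((t1 / (2 * r)) +i* (t2 / (2 * r))); rewrite /=; simpc.
rewrite -opprD y2 -expr2 r2 !(mulrC (t2 / _)) !subrr addNr.
by split; apply/eqP; rewrite eq_complex /= ?eqxx ?andbT; [| |apply/andP; split];
  apply/eqP; field.
Qed.

(* [<v| N |v> = 0] for [v = (x, y)] and [N = [[a, p], [q, -a]]]. *)
Lemma traceless_numerical_range0 (a p q : C) : exists x y : C,
  x * x^* + y * y^* = 1 /\ a * (x * x^* - y * y^*) + x^* * y * p + x * y^* * q = 0.
Proof.
case: a => a1 a2; case: p => p1 p2; case: q => q1 q2.
have [t1 [t2 [t3 [t3_ge0 t_unit e1 e2]]]] :=
  exists_unit_common_zero3 (p1 + q1) (q2 - p2) (2 * a1) (p2 + q2) (p1 - q1) (2 * a2).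
have [|x [y [xy_unit xy_t3 xy_t12]]] := qubit_of_bloch _ t_unit; first by lra.
exists x, y; split => //.
have yx_t12 : 2%:R * (x * y^*) = t1 -i* t2.
  by move: (congr1 Num.conj xy_t12); rewrite !rmorphM /= conjCK rmorph_nat.
have two_neq0 : 2%:R != 0 :> C by rewrite pnatr_eq0.
apply: (mulfI two_neq0); rewrite mulr0.
transitivity (2%:R * (a1 +i* a2) * t3%:C + 2%:R * (x^* * y) * (p1 +i* p2)
              + 2%:R * (x * y^*) * (q1 +i* q2)); first by rewrite -xy_t3; ring.
rewrite xy_t12 yx_t12; simpc; apply/eqP; rewrite eq_complex /=.
by apply/andP; split; apply/eqP; [rewrite -e1 | rewrite -e2]; ring.
Qed.

Definition mx2 (a b c d : C) : 'M[C]_2 :=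
  \matrix_(i, j) if i == 0 then if j == 0 then a else b else if j == 0 then c else d.

Lemma unitary_rot2 (x y : C) : x * x^* + y * y^* = 1 -> unitary (mx2 x^* y^* (- y) x).
Proof. by move=> xy_unit; rewrite /unitary; mx2_entries; rewrite -?xy_unit; ring. Qed.

Lemma unitary_phase2 (w : C) : w * w^* = 1 -> unitary (mx2 w 0 0 1).
Proof. by move=> w_unit; rewrite /unitary; mx2_entries; rewrite ?w_unit; ring. Qed.

Lemma unitary_swap2 : unitary (mx2 0 1 1 0).
Proof. by rewrite /unitary; mx2_entries; ring. Qed.

Lemma unitary_zero_diag (N : 'M[C]_2) : \tr N = 0 ->
  exists2 U : 'M[C]_2, unitary U & (U *m N *m adj U) 0 0 = 0 /\ (U *m N *m adj U) 1 1 = 0.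
Proof.
move=> trN; have N11 : N 1 1 = - N 0 0 by apply/eqP; rewrite -addr_eq0 addrC -mxtrace2 trN.
have [x [y [xy_unit N_xy]]] := traceless_numerical_range0 (N 0 0) (N 0 1) (N 1 0).
have U_unitary := unitary_rot2 xy_unit.
exists (mx2 x^* y^* (- y) x) => //.
set P := _ *m N *m _.
have P00 : P 0 0 = 0 by rewrite -N_xy !(mxE, sum_ord2) /= !conjCK N11; ring.
by split => //; have := mxtrace_unitary_conj N U_unitary; rewrite trN mxtrace2 P00 add0r.
Qed.

Lemma unitary_antidiag_form (N : 'M[C]_2) : \tr N = 0 -> \tr (N *m adj N) = 1 ->
  exists (U : 'M[C]_2) (z th : R), [/\ unitary U, 0 <= th <= pi / 2 &
    U *m N *m adj U = expi z *: mx2 0 (rc (cos th)) (rc (sin th)) 0].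
Proof.
move=> trN frobN; have [U0 U0_unitary [P00 P11]] := unitary_zero_diag trN.
have [P P_def] : {P | U0 *m N *m adj U0 = P} by eexists.
rewrite P_def in P00 P11.
have P_unit : P 0 1 * (P 0 1)^* + P 1 0 * (P 1 0)^* = 1.
  have := frobenius_unitary_conj N U0_unitary; rewrite P_def frobN mxtrace2.
  by rewrite !(mxE, sum_ord2) /= P00 P11 rmorph0 !mul0r add0r addr0.
have [w [e [th [w_unit e_unit hth wP01 wP10]]]] := phase_align P_unit.
have [z ez] := expi_surj e_unit; subst e.
exists (mx2 w 0 0 1 *m U0), z, th; split => //.
  exact: unitaryM (unitary_phase2 w_unit) U0_unitary.
rewrite (_ : _ *m N *m _ = mx2 w 0 0 1 *m P *m adj (mx2 w 0 0 1)); last first.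
  by rewrite -P_def !adjM !mulmxA.
by mx2_entries; rewrite ?P00 ?P11 -?wP01 -?wP10; ring.
Qed.

Lemma normr_det_antidiag (z th : R) : 0 <= th <= pi / 2 ->
  `|2%:R * \det (expi z *: mx2 0 (rc (cos th)) (rc (sin th)) 0)| = rc (sin (2 * th)).
Proof.
move=> /andP [th_ge0 th_le]; have := pi_ge0 R => pi_ge0.
have cos_ge0 : 0 <= cos th by apply: cos_ge0_pihalf; apply/andP; split; lra.
have sin_ge0 : 0 <= sin th by apply: sin_ge0_pi; apply/andP; split; lra.
rewrite det2; mx2_simpl; rewrite (_ : _ - _ = - (expi z ^+ 2 * rc (cos th * sin th))).
  rewrite mulrN normrN normrM normr_nat normrM normrX normr_expi expr1n mul1r.
  by rewrite ger0_norm ?ler0c ?mulr_ge0 // sin_mul2 /rc !rmorphM rmorph_nat; ring.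
by rewrite /rc rmorphM; ring.
Qed.

Lemma LU_normal_form_traceless (N : 'M[C]_2) (k : C) : \tr N = 0 -> \tr (N *m adj N) = 1 ->
  exists (Va Vb : 'M[C]_2) (z th : R),
    [/\ unitary Va /\ unitary Vb, 0 <= th <= pi / 2, `|2%:R * \det N| = rc (sin (2 * th)),
        (Va *t Vb) *m vec (k *: 1%:M) = k *: (ket2 R 0 1 + ket2 R 1 0)
      & (Va *t Vb) *m vec N =
          expi z *: (rc (cos th) *: ket2 R 0 0 + rc (sin th) *: ket2 R 1 1)].
Proof.
move=> trN frobN; have [U [z [th [U_unitary hth UNU]]]] := unitary_antidiag_form trN frobN.
exists U, (mx2 0 1 1 0 *m (adj U)^T), z, th; split => //.
- by split => //; apply: unitaryM unitary_swap2 (unitary_trmx_adj U_unitary).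
- by rewrite -(det_unitary_conj N U_unitary) UNU normr_det_antidiag.
- rewrite tensmx_adjT_mul_vec -scalemxAr mulmx1 -scalemxAl U_unitary -scalemxAl mul1mx.
  by rewrite !ket2E; vec2_entries; ring.
- by rewrite tensmx_adjT_mul_vec UNU !ket2E; vec2_entries; ring.
Qed.

Definition psi2_mx (phi alpha beta : R) : 'M[C]_2 :=
  mx2 (expi beta * rc (sin phi / Num.sqrt 2)) (rc (cos phi * cos alpha))
      (rc (cos phi * sin alpha)) (- (expi beta * rc (sin phi / Num.sqrt 2))).

Lemma sqr_div_sqrt2 (x : R) : (x / Num.sqrt 2) ^+ 2 = x ^+ 2 / 2.
Proof. by rewrite expr_div_n sqr_sqrtr ?ler0n. Qed.

Lemma mxtrace_psi2_mx phi alpha beta : \tr (psi2_mx phi alpha beta) = 0.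
Proof. by rewrite mxtrace2 !mxE /= subrr. Qed.

Lemma frobenius_psi2_mx phi alpha beta :
  \tr (psi2_mx phi alpha beta *m adj (psi2_mx phi alpha beta)) = 1.
Proof.
rewrite mxtrace2; mx2_simpl; rewrite !conj_rc.
transitivity (expi beta * (expi beta)^* * rc (2 * (sin phi / Num.sqrt 2) ^+ 2)
              + rc (cos phi ^+ 2 * (cos alpha ^+ 2 + sin alpha ^+ 2))).
  by rewrite /rc !(rmorphM, rmorphD, rmorphXn) ?rmorph_nat; ring.
rewrite expi_mulJ mul1r cos2Dsin2 mulr1 sqr_div_sqrt2 mulrC divfK ?pnatr_eq0 //.
by rewrite /rc -rmorphD addrC cos2Dsin2 rmorph1.
Qed.

Lemma det_psi2_mx phi alpha beta : 2%:R * \det (psi2_mx phi alpha beta) =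
  - (expi (2 * beta) * rc (sin phi ^+ 2) + rc (cos phi ^+ 2 * sin (2 * alpha))).
Proof.
rewrite det2; mx2_simpl; rewrite expi_mul2 sin_mul2.
rewrite -[sin phi ^+ 2](divfK (_ : 2 != 0)) ?pnatr_eq0 // -sqr_div_sqrt2.
by rewrite /rc !(rmorphM, rmorphXn) ?rmorph_nat; ring.
Qed.

End TwoQubits.

Theorem mainTheorem2 (R : realType) (phi alpha beta : R)
  (hphi : 0 <= phi <= pi / 2) (halpha : 0 <= alpha <= pi / 2)
  (hbeta : 0 <= beta <= 2 * pi) :
  let s2 := rc (Num.sqrt (2 : R)) in
  let psi1 : 'M[R[i]]_(2 * 2, 1 * 1) :=
    s2^-1 *: (ket2 R 0 0 + ket2 R 1 1) in
  let psi2 : 'M[R[i]]_(2 * 2, 1 * 1) :=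
    rc (cos phi) *: (rc (cos alpha) *: ket2 R 0 1 + rc (sin alpha) *: ket2 R 1 0)
    + (expi beta * rc (sin phi) / s2) *: (ket2 R 0 0 - ket2 R 1 1) in
  exists (Va Vb : 'M[R[i]]_2) (zeta theta' : R),
    [/\ unitary Va /\ unitary Vb, 0 <= theta' <= pi / 2,
      rc (sin (2 * theta')) =
        Num.norm (expi (2 * beta) * rc (sin phi ^+ 2)
           + rc (cos phi ^+ 2 * sin (2 * alpha))),
      (Va *t Vb) *m psi1 = s2^-1 *: (ket2 R 0 1 + ket2 R 1 0) /\
      (Va *t Vb) *m psi2 =
        expi zeta *: (rc (cos theta') *: ket2 R 0 0 + rc (sin theta') *: ket2 R 1 1)
    & forall nu1 nu2 : R, 0 <= nu1 <= 1 -> 0 <= nu2 <= 1 -> nu1 + nu2 = 1 ->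
        LU_equiv (rc nu1 *: proj psi1 + rc nu2 *: proj psi2)
          (rc nu2 *: proj (rc (cos theta') *: ket2 R 0 0 + rc (sin theta') *: ket2 R 1 1)
           + rc nu1 *: proj (s2^-1 *: (ket2 R 0 1 + ket2 R 1 0)))].
Proof.
move=> s2 psi1 psi2.
have psi1E : psi1 = vec (s2^-1 *: 1%:M) by rewrite /psi1 !ket2E; vec2_entries; ring.
have psi2E : psi2 = vec (psi2_mx phi alpha beta).
  rewrite /psi2 /psi2_mx /s2 !ket2E.
  by vec2_entries; rewrite /rc ?fmorph_div ?rmorphM; ring.
have [Va [Vb [z [th [[Va_unitary Vb_unitary] hth sin2th Vpsi1 Vpsi2]]]]] :=
  LU_normal_form_traceless (s2^-1) (mxtrace_psi2_mx phi alpha beta)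
                                    (frobenius_psi2_mx phi alpha beta).
exists Va, Vb, z, th; split => //.
- by rewrite -sin2th det_psi2_mx normrN.
- by rewrite psi1E psi2E.
move=> nu1 nu2 _ _ _; exists Va, Vb; do 2!split => //.
by rewrite mulmx_mix_proj_adj psi1E psi2E Vpsi1 Vpsi2 (projZ _ (expi_mulJ z)) addrC.
Qed.
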